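(* Let $m\ge 4$ be an integer, and let $H_m$ be the group defined below. Then: (i) $C_{H_m}((x_1,0)) = \langle (x_1,0),(x_2,0),(0,w) \mid w\in W_m\rangle$ and $C_{H_m}((x_m,0)) = \langle (x_m,0),(x_{m-1},0),(0,w)\mid w\in W_m\rangle$; (ii) $[H_m,H_m]=Z(H_m)=\{(0,w)\in H_m \mid w\in W_m\}$, and this group has order $2^{m-2}$; (iii) $X=\{(v,0)\in H_m\mid v\in V_m\}$ is a transversal to $Z(H_m)$ in $H_m$; (iv) $\langle (x_1,0),\dots,(x_{m-1},0)\rangle \cong H_{m-1}$.
   Context: For an integer $m\ge 3$, let $V_m$ and $W_m$ be vector spaces over $\mathrm{GF}(2)$ of dimensions $m$ and $m-2$, with ordered bases $x_1,\dots,x_m$ and $y_1,\dots,y_{m-2}$ respectively. Let $f_m:V_m\times V_m\to W_m$ be the bilinear map determined on basis vectors by $f_m(x_i,x_j)=0$ if $j\in\{i,i+1\}$, $f_m(x_i,x_j)=y_{j-i-1}$ if $i+2\le j\le m$, and $f_m(x_i,x_j)=0$ if $i>j$. The group $H_m$ has underlying set $V_m\times W_m$ with multiplication $(a,b)\cdot(c,d)=(a+c,\ f_m(a,c)+b+d)$; its identity is $(0,0)$. *)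

From HB Require Import structures.
From mathcomp Require Import all_boot all_fingroup all_algebra.
Set Implicit Arguments. Unset Strict Implicit. Unset Printing Implicit Defensive.
Import GRing.Theory.
Local Open Scope ring_scope.

Definition Vm (m : nat) := 'rV['F_2]_m.
Definition Wm (m : nat) := 'rV['F_2]_(m - 2).

(* 1-based basis vector x_i of V_m (resp. y_i of W_m): coordinate j (0-based)
   is 1 iff j+1 = i. *)
Definition xb (m i : nat) : 'rV['F_2]_m := \row_(j < m) ((j.+1 == i)%:R).

(* On basis vectors (1-based)
   f(x_i, x_j) = y_(j-i-1) if j >= i+2, and 0 otherwise.  With 0-based
   indices i, j of V_m and k of W_m this is: coefficient of y at k is 1
   iff j = i + k + 2. *)
Definition fB (m : nat) (k : 'I_(m - 2)) : 'M['F_2]_m :=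
  \matrix_(i < m, j < m) (((j : nat) == (i + k + 2)%N)%:R).
Definition fm (m : nat) (a c : 'rV['F_2]_m) : 'rV['F_2]_(m - 2) :=
  \row_(k < m - 2) (a *m fB k *m c^T) 0 0.

Lemma fmE m a c k : @fm m a c 0 k = (a *m fB k *m c^T) 0 0.
Proof. by rewrite mxE. Qed.

Lemma fmDl m a b c : @fm m (a + b) c = fm a c + fm b c.
Proof. by apply/rowP => k; rewrite [RHS]mxE !fmE !mulmxDl mxE. Qed.
Lemma fmDr m a b c : @fm m a (b + c) = fm a b + fm a c.
Proof. by apply/rowP => k; rewrite [RHS]mxE !fmE linearD /= mulmxDr mxE. Qed.
Lemma fmNl m a c : @fm m (- a) c = - fm a c.
Proof. by apply/rowP => k; rewrite [RHS]mxE !fmE !mulNmx mxE. Qed.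
Lemma fmNr m a c : @fm m a (- c) = - fm a c.
Proof. by apply/rowP => k; rewrite [RHS]mxE !fmE linearN /= mulmxN mxE. Qed.
Lemma fm0l m c : @fm m 0 c = 0.
Proof. by apply/rowP => k; rewrite [RHS]mxE !fmE !mul0mx mxE. Qed.

Definition Hm (m : nat) : Type := (Vm m * Wm m)%type.
HB.instance Definition _ m := Finite.on (Hm m).

Definition hm (m : nat) (a : 'rV['F_2]_m) (b : 'rV['F_2]_(m - 2)) : Hm m :=
  (a, b).

Definition Hmul m (x y : Hm m) : Hm m :=
  (x.1 + y.1, fm x.1 y.1 + x.2 + y.2).
Definition Hone m : Hm m := (0, 0).
Definition Hinv m (x : Hm m) : Hm m := (- x.1, - (x.2 + fm x.1 (- x.1))).

Lemma AC4 (V : zmodType) (p q r s : V) : p + q + r + s = q + s + p + r.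
Proof. by rewrite (addrC p q) (addrAC (q + p)) (addrAC q). Qed.

Lemma HmulA m : associative (@Hmul m).
Proof.
move=> [a b] [c d] [e g]; rewrite /Hmul /=; congr pair; first by rewrite addrA.
rewrite fmDl fmDr !addrA; congr (_ + _ + _).
exact: AC4.
Qed.

Lemma Hmul1 m : left_id (@Hone m) (@Hmul m).
Proof. by move=> [a b]; rewrite /Hmul /= fm0l !add0r. Qed.

Lemma HmulV m : left_inverse (@Hone m) (@Hinv m) (@Hmul m).
Proof.
move=> [a b]; rewrite /Hmul /Hinv /Hone /=; congr pair; first by rewrite addNr.
by rewrite fmNl fmNr opprD addrA addrAC -!addrA addNr addr0 addrC addNr.
Qed.

HB.instance Definition _ m :=
  Finite_isGroup.Build (Hm m) (@HmulA m) (@Hmul1 m) (@HmulV m).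

Definition Zset m : {set Hm m} := [set hm 0 w | w : 'rV['F_2]_(m - 2)].

Lemma Hm_mulE m (a c : 'rV['F_2]_m) (b d : 'rV['F_2]_(m - 2)) :
  (hm a b * hm c d)%g = hm (a + c) (fm a c + b + d).
Proof. by []. Qed.
Lemma Hm_oneE m : (1%g : Hm m) = hm 0 0.
Proof. by []. Qed.

(* By bilinearity f(a, c) = sum_(i + 2 <= j) a_i c_j y_(j-i-1).  Hence f(x_1, c) =
   sum_j c_j y_(j-2) while f(c, x_1) = 0, and dually f(x_m, c) = 0 while f(c, x_m) =
   sum_i c_i y_(m-i-1).  As (a,b) and (c,d) commute iff f(a,c) = f(c,a), the centralizers
   of (x_1,0) and (x_m,0) are cut out by support conditions on the V-part, and for m >= 4
   the two conditions together force the V-part to vanish, which gives the centre.  Each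
   central (0, y_k) is the commutator of (x_1,0) and (x_(k+2),0), and over GF(2) every
   vector is a sum of basis vectors, so all generation claims reduce to support arguments;
   zero-padding embeds H_(m-1) onto the subgroup generated by (x_1,0), ..., (x_(m-1),0). *)

From HB Require Import structures.
From mathcomp Require Import all_boot all_fingroup all_algebra all_solvable.
From mathcomp Require Import zify ring.
Set Implicit Arguments. Unset Strict Implicit. Unset Printing Implicit Defensive.
Import GRing.Theory.
Local Open Scope ring_scope.

Section RowCoefficients.
Variable R : zmodType.
Local Notation rV n := 'rV[R]_n.

(* Entries are indexed by nat, so that index arithmetic such as i + k + 2 needs no
   bound proofs; out-of-range entries read as 0. *)
Definition rcoef n (a : rV n) (i : nat) : R := if insub i is Some j then a 0 j else 0.

Lemma rcoefE n (a : rV n) (j : 'I_n) : rcoef a j = a 0 j.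
Proof.
by rewrite /rcoef (insubT (fun i => i < n)%N (ltn_ord j)); congr (a 0 _); apply: val_inj.
Qed.

Lemma rcoef_out n (a : rV n) i : (n <= i)%N -> rcoef a i = 0.
Proof. by move=> le_n_i; rewrite /rcoef insubF // ltnNge le_n_i. Qed.

Lemma rcoef_inj n (a b : rV n) : rcoef a =1 rcoef b -> a = b.
Proof. by move=> eq_ab; apply/rowP => j; rewrite -!rcoefE eq_ab. Qed.

Lemma rcoef0 n i : rcoef (0 : rV n) i = 0.
Proof. by rewrite /rcoef; case: insub => [j|]; rewrite ?mxE. Qed.

Lemma rcoefD n (a b : rV n) i : rcoef (a + b) i = rcoef a i + rcoef b i.
Proof. by rewrite /rcoef; case: insub => [j|]; rewrite ?mxE ?addr0. Qed.

Lemma rcoefN n (a : rV n) i : rcoef (- a) i = - rcoef a i.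
Proof. by rewrite /rcoef; case: insub => [j|]; rewrite ?mxE ?oppr0. Qed.

Lemma rcoefB n (a b : rV n) i : rcoef (a - b) i = rcoef a i - rcoef b i.
Proof. by rewrite rcoefD rcoefN. Qed.

Definition pad n N (a : rV n) : rV N := \row_(j < N) rcoef a j.

Lemma rcoef_pad n N (a : rV n) i : (n <= N)%N -> rcoef (pad N a) i = rcoef a i.
Proof.
move=> le_n_N; case: (ltnP i N) => [lt_i_N | le_N_i].
  by rewrite -[i]/(val (Ordinal lt_i_N)) rcoefE mxE.
by rewrite !rcoef_out // (leq_trans le_n_N le_N_i).
Qed.

Lemma padD n N (a b : rV n) : pad N (a + b) = pad N a + pad N b.
Proof. by apply/rowP => j; rewrite !mxE rcoefD. Qed.

Lemma pad0 n N : pad N (0 : rV n) = 0.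
Proof. by apply/rowP => j; rewrite !mxE rcoef0. Qed.

Lemma pad_inj n N : (n <= N)%N -> injective (@pad n N).
Proof.
move=> le_n_N a b /(congr1 (@rcoef N)) eq_ab; apply: rcoef_inj => i.
by rewrite -!(rcoef_pad _ _ le_n_N) eq_ab.
Qed.

End RowCoefficients.

Lemma rcoef_xb n p i : rcoef (xb n p) i = ((i.+1 == p) && (i < n)%N)%:R.
Proof.
case: (ltnP i n) => [lt_i_n | le_n_i]; last by rewrite rcoef_out // andbF.
by rewrite -[i]/(val (Ordinal lt_i_n)) rcoefE mxE andbT.
Qed.

Lemma pad_xb n N p : (p <= n <= N)%N -> pad N (xb n p) = xb N p.
Proof.
case/andP=> le_p_n le_n_N; apply: rcoef_inj => i; rewrite rcoef_pad // !rcoef_xb.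
case: eqP => //= eq_ip; rewrite -eq_ip in le_p_n.
by rewrite le_p_n (leq_trans le_p_n le_n_N).
Qed.

Lemma xb_delta n (j : 'I_n) : xb n j.+1 = delta_mx 0 j.
Proof. by apply/rowP => i; rewrite !mxE eqSS. Qed.

Lemma sum_nat_delta (R : pzSemiRingType) N p (F : nat -> R) :
  \sum_(0 <= i < N) (i == p)%:R * F i = (p < N)%:R * F p.
Proof.
elim: N => [|N IH]; first by rewrite big_geq // mul0r.
rewrite big_nat_recr //= IH; case: (ltngtP p N) => [lt_p_N | lt_N_p | ->].
- by rewrite ltnS (ltnW lt_p_N) mul0r addr0.
- by rewrite ltnS leqNgt lt_N_p !mul0r addr0.
- by rewrite ltnSn mul0r add0r.
Qed.

Lemma rcoef_fm m (a c : 'rV['F_2]_m) k :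
  rcoef (fm a c) k = \sum_(0 <= i < m) rcoef a i * rcoef c (i + k + 2).
Proof.
case: (ltnP k (m - 2)) => [lt_k | le_k]; last first.
  rewrite rcoef_out // big1_seq // => i; rewrite mem_index_iota => /andP[_ lt_i].
  by rewrite (rcoef_out c) ?mulr0 //; lia.
rewrite -[k]/(val (Ordinal lt_k)) rcoefE fmE !mxE big_mkord.
under eq_bigr => j _ do rewrite !mxE big_distrl /=.
rewrite exchange_big /=; apply: eq_bigr => i _.
under eq_bigr => j _ do rewrite mxE -mulrA.
rewrite -big_distrr rcoefE /=; congr (_ * _).
under eq_bigr => j _ do rewrite -rcoefE.
rewrite -(big_mkord xpredT (fun j => (j == i + k + 2)%N%:R * rcoef c j)) sum_nat_delta.
by case: ltnP => lt; rewrite ?mul1r // rcoef_out // mul0r.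
Qed.

Lemma fm0r m (a : 'rV['F_2]_m) : fm a 0 = 0.
Proof. by apply: rcoef_inj => k; rewrite rcoef_fm rcoef0 big1 // => i _; rewrite rcoef0 mulr0. Qed.

Lemma rcoef_fm_xbl m p (c : 'rV['F_2]_m) k :
  (0 < p)%N -> rcoef (fm (xb m p) c) k = rcoef c (p + k + 1).
Proof.
move=> p_gt0; rewrite rcoef_fm.
rewrite (eq_big_nat _ _ (F2 := fun i => (i == p.-1)%:R * rcoef c (i + k + 2))); last first.
  by move=> i /andP[_ lt_i]; rewrite rcoef_xb lt_i andbT; congr (_%:R * _); apply/eqP/eqP; lia.
rewrite sum_nat_delta; case: ltnP => [_ | le_m]; first by rewrite mul1r; congr rcoef; lia.
by rewrite mul0r rcoef_out //; lia.
Qed.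

Lemma rcoef_fm_xbr m p (c : 'rV['F_2]_m) k : (p <= m)%N ->
  rcoef (fm c (xb m p)) k = if (k + 3 <= p)%N then rcoef c (p - (k + 3)) else 0.
Proof.
move=> le_p_m; rewrite rcoef_fm.
rewrite (eq_big_nat _ _
  (F2 := fun i => (i == p - (k + 3))%N%:R * ((k + 3 <= p)%N%:R * rcoef c i))); last first.
  move=> i /andP[_ lt_i]; rewrite rcoef_xb.
  have -> : (((i + k + 2).+1 == p) && (i + k + 2 < m))%N =
            ((i == p - (k + 3)) && (k + 3 <= p))%N.
    by apply/andP/andP => -[/eqP ? ?]; split; try apply/eqP; lia.
  by rewrite -mulnb natrM; ring.
rewrite sum_nat_delta; case: (leqP (k + 3) p) => [le_kp | _]; last by rewrite !mul0r mulr0.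
by rewrite !mul1r (_ : p - (k + 3) < m)%N ?mul1r //; lia.
Qed.

Lemma fm_pad n N (a c : 'rV['F_2]_n) : (n <= N)%N ->
  fm (pad N a) (pad N c) = pad (N - 2) (fm a c).
Proof.
move=> le_n_N; apply: rcoef_inj => k; rewrite rcoef_pad; last by lia.
rewrite !rcoef_fm (@big_cat_nat _ _ _ n 0 N) //= [X in _ + X]big1_seq ?addr0.
  by apply: eq_bigr => i _; rewrite !rcoef_pad.
move=> i; rewrite mem_index_iota /= => /andP[le_n_i _].
by rewrite rcoef_pad // rcoef_out ?mul0r.
Qed.

Lemma F2_eq0_or_1 (x : 'F_2) : x = 0 \/ x = 1.
Proof. by case: x => [[|[|//]] lt_x]; [left | right]; apply: val_inj. Qed.

Definition supported n (P : pred nat) (c : 'rV['F_2]_n) := forall i, ~~ P i -> rcoef c i = 0.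

Lemma supported_ind n (P : pred nat) (Q : 'rV['F_2]_n -> Prop) :
  Q 0 -> (forall u v, Q u -> Q v -> Q (u + v)) ->
  (forall j : 'I_n, P j -> Q (delta_mx 0 j)) ->
  forall c, supported P c -> Q c.
Proof.
move=> Q0 QD Qdelta c supp_c; rewrite (row_sum_delta c); apply: big_ind => // j _.
have [cj0 | cj1] := F2_eq0_or_1 (c 0 j); first by rewrite cj0 scale0r.
rewrite cj1 scale1r; apply: Qdelta; apply: contraLR isT => notPj.
by move: (supp_c j notPj); rewrite rcoefE cj1 => /eqP; rewrite oner_eq0.
Qed.

Local Open Scope group_scope.

Lemma Hm_invE m (a : 'rV['F_2]_m) b : (hm a b)^-1 = hm (- a) (- (b + fm a (- a))).
Proof. by []. Qed.

Lemma hm_split m (c : 'rV['F_2]_m) d d' : hm c d = hm c d' * hm 0 (d - d').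
Proof. by rewrite Hm_mulE addr0 fm0r add0r addrC subrK. Qed.

Lemma commg_hm m (a c : 'rV['F_2]_m) b d : [~ hm a b, hm c d] = hm 0 (fm a c - fm c a).
Proof.
rewrite -(mulKg (hm c d * hm a b) [~ hm a b, hm c d]) -commgC.
rewrite [hm c d * _]Hm_mulE [hm a b * _]Hm_mulE Hm_invE Hm_mulE [a + c]addrC addNr fmNl fmNr.
congr hm; move: (fm a c) (fm c a) (fm (c + a) (c + a)) => F G H.
by apply/rowP => k; rewrite !mxE; ring.
Qed.

Lemma cent1_hm m (x y : Hm m) : (y \in 'C[x]) = (fm y.1 x.1 == fm x.1 y.1).
Proof.
case: x y => [a b] [c d]; rewrite cent1E.
change (((c + a, fm c a + d + b) == (a + c, fm a c + b + d)) = (fm c a == fm a c)).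
rewrite xpair_eqE addrC eqxx /= [fm c a + d + b]addrAC.
by rewrite (inj_eq (addIr _)) (inj_eq (addIr _)).
Qed.

Lemma cent1_x1 m (y : Hm m) : (0 < m)%N ->
  y \in 'C[hm (xb m 1) 0] <-> supported [pred i | i < 2]%N y.1.
Proof.
move=> m_gt0; rewrite cent1_hm /=.
have -> : fm y.1 (xb m 1) = 0.
  by apply: rcoef_inj => k; rewrite rcoef_fm_xbr // rcoef0 ifF //; lia.
split => [/eqP y_x1 i | supp_y].
  rewrite -leqNgt => le2i; have := congr1 (fun w => rcoef w (i - 2)%N) y_x1.
  by rewrite rcoef0 rcoef_fm_xbl // (_ : 1 + (i - 2) + 1 = i)%N; [move-> | lia].
by apply/eqP/rcoef_inj => k; rewrite rcoef0 rcoef_fm_xbl // supp_y //=; lia.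
Qed.

Lemma cent1_xm m (y : Hm m) : (0 < m)%N ->
  y \in 'C[hm (xb m m) 0] <-> supported [pred i | m - 2 <= i]%N y.1.
Proof.
move=> m_gt0; rewrite cent1_hm /=.
have -> : fm (xb m m) y.1 = 0.
  by apply: rcoef_inj => k; rewrite rcoef_fm_xbl // rcoef0 rcoef_out //; lia.
split => [/eqP y_xm i | supp_y].
  rewrite -ltnNge => lt_i; have := congr1 (fun w => rcoef w (m - 3 - i)%N) y_xm.
  rewrite rcoef0 rcoef_fm_xbr // ifT; last by lia.
  by rewrite (_ : m - (m - 3 - i + 3) = i)%N; [move-> | lia].
apply/eqP/rcoef_inj => k; rewrite rcoef0 rcoef_fm_xbr //.
by case: ifP => // le_k; rewrite supp_y //=; lia.
Qed.

Lemma mem_Zset m (y : Hm m) : (y \in Zset m) = (y.1 == 0).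
Proof. by apply/imsetP/eqP => [[w _ ->] // | ]; case: y => a b /= ->; exists b. Qed.

Lemma center_Hm m : (4 <= m)%N -> 'Z([set: Hm m]) = Zset m.
Proof.
move=> m_ge4; apply/setP => y; rewrite mem_Zset.
apply/idP/eqP => [/centerP[_ cent_y] | y1_0].
  have cent1_y x : y \in 'C[x] by apply/cent1P; apply: cent_y; rewrite inE.
  have /cent1_x1 supp1 := cent1_y (hm (xb m 1) 0).
  have /cent1_xm supp_m := cent1_y (hm (xb m m) 0).
  apply: rcoef_inj => i; rewrite rcoef0; have [lt_i2 | le2i] := ltnP i 2.
    by apply: supp_m => //=; lia.
  by apply: supp1 => /=; lia.
apply/centerP; split => [|x _]; first by rewrite inE.
by apply/cent1P; rewrite cent1_hm y1_0 fm0l fm0r.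
Qed.

Lemma supported_xb m (P : pred nat) p : P p.-1 -> supported P (xb m p).
Proof.
move=> Pp i notPi; rewrite rcoef_xb; case: eqP => //= eq_ip.
by rewrite -eq_ip /= in Pp; rewrite Pp in notPi.
Qed.

Lemma exists_hm_supported m (K : {group Hm m}) (P : pred nat) c :
  (forall j : 'I_m, P j -> hm (xb m j.+1) 0 \in K) -> supported P c ->
  exists d, hm c d \in K.
Proof.
move=> xbK; apply: (supported_ind (Q := fun c => exists d, hm c d \in K)).
- by exists 0; rewrite -Hm_oneE group1.
- by move=> u v [du Ku] [dv Kv]; exists (fm u v + du + dv); rewrite -Hm_mulE groupM.
- by move=> j Pj; exists 0; rewrite -xb_delta xbK.
Qed.

Lemma mem_hm0_supported m (K : {group Hm m}) (P : pred nat) w :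
  (forall j : 'I_(m - 2), P j -> hm 0 (delta_mx 0 j) \in K) -> supported P w ->
  hm 0 w \in K.
Proof.
move=> deltaK; apply: (supported_ind (Q := fun w => hm 0 w \in K)) => //.
- by rewrite -Hm_oneE group1.
- move=> u v Ku Kv; suff -> : hm 0 (u + v) = hm 0 u * hm 0 v by rewrite groupM.
  by rewrite Hm_mulE addr0 fm0l add0r.
Qed.

Lemma cent1_eq_gen m (x : Hm m) (P : pred nat) (S : {set Hm m}) :
  (forall y, y \in 'C[x] <-> supported P y.1) -> S \subset 'C[x] -> Zset m \subset S ->
  (forall j : 'I_m, P j -> hm (xb m j.+1) 0 \in S) -> 'C[x] = <<S>>.
Proof.
move=> centxP sub_S_C sub_Z_S xbS; apply/eqP; rewrite eqEsubset gen_subG sub_S_C andbT.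
apply/subsetP => -[a b] /centxP /= supp_a.
have [d Sd] := exists_hm_supported (fun j Pj => mem_gen (xbS j Pj)) supp_a.
rewrite -[(a, b)]/(hm a b) (hm_split a b d) groupM // mem_gen // (subsetP sub_Z_S) //.
by rewrite mem_Zset.
Qed.

Lemma cent1_x1_gen m : (2 <= m)%N ->
  'C[hm (xb m 1) 0] = <<[set hm (xb m 1) 0; hm (xb m 2) 0] :|: Zset m>>.
Proof.
move=> m_ge2; have m_gt0 : (0 < m)%N by lia.
apply: (cent1_eq_gen (P := [pred i | i < 2]%N)) => [y | | | [[|[|//]] j] _].
- exact: cent1_x1.
- apply/subsetP => y; rewrite in_setU in_set2 mem_Zset -orbA.
  case/or3P => [/eqP-> | /eqP-> | /eqP y1_0]; apply/(cent1_x1 _ m_gt0).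
  + exact: supported_xb.
  + exact: supported_xb.
  by rewrite y1_0 => i _; rewrite rcoef0.
- exact: subsetUr.
- by rewrite !inE eqxx.
- by rewrite !inE eqxx orbT.
Qed.

Lemma cent1_xm_gen m : (2 <= m)%N ->
  'C[hm (xb m m) 0] = <<[set hm (xb m m) 0; hm (xb m m.-1) 0] :|: Zset m>>.
Proof.
move=> m_ge2; have m_gt0 : (0 < m)%N by lia.
apply: (cent1_eq_gen (P := [pred i | m - 2 <= i]%N)) => [y | | | j /= le_j].
- exact: cent1_xm.
- apply/subsetP => y; rewrite in_setU in_set2 mem_Zset -orbA.
  case/or3P => [/eqP-> | /eqP-> | /eqP y1_0]; apply/(cent1_xm _ m_gt0).
  + by apply: supported_xb => /=; lia.
  + by apply: supported_xb => /=; lia.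
  by rewrite y1_0 => i _; rewrite rcoef0.
- exact: subsetUr.
have [-> | ne_jm] := eqVneq j.+1 m; first by rewrite !inE eqxx.
by rewrite !inE (_ : j.+1 = m.-1) ?eqxx ?orbT //; move: (ltn_ord j) ne_jm => ? /eqP; lia.
Qed.

Lemma commg_x1_xb m (j : 'I_(m - 2)) :
  [~ hm (xb m 1) 0, hm (xb m j.+3) 0] = hm 0 (delta_mx 0 j).
Proof.
have lt_j := ltn_ord j; rewrite commg_hm -xb_delta; congr hm; apply: rcoef_inj => k.
rewrite rcoefB rcoef_fm_xbl // rcoef_fm_xbr ?ifF ?subr0 ?rcoef_xb; try lia.
suff -> : (((1 + k + 1).+1 == j.+3) && (1 + k + 1 < m))%N =
          ((k.+1 == j.+1) && (k < m - 2))%N by [].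
by apply/andP/andP => -[/eqP ? ?]; split; try apply/eqP; lia.
Qed.

Lemma der1_Hm m : (4 <= m)%N -> [~: [set: Hm m], [set: Hm m]] = 'Z([set: Hm m]).
Proof.
move=> m_ge4; apply/eqP; rewrite eqEsubset gen_subG; apply/andP; split.
  apply/subsetP => _ /imset2P[[a b] [c d] _ _ ->].
  by rewrite -[(a, b)]/(hm a b) -[(c, d)]/(hm c d) commg_hm /= center_Hm // mem_Zset.
rewrite center_Hm //; apply/subsetP => -[a b]; rewrite mem_Zset /= => /eqP->.
apply: (mem_hm0_supported (P := predT)) => // j _.
by rewrite -commg_x1_xb mem_commg ?inE.
Qed.

Lemma card_Zset m : #|Zset m| = (2 ^ (m - 2))%N.
Proof. by rewrite card_imset => [|u v []//]; rewrite card_mx card_Fp // mul1n. Qed.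

Lemma transversal_center_Hm m : (4 <= m)%N ->
  is_transversal [set hm v 0 | v : 'rV['F_2]_m]
    (rcosets 'Z([set: Hm m]) [set: Hm m]) [set: Hm m].
Proof.
move=> m_ge4; apply/and3P; split; [exact: rcosets_partition (subsetT _) | exact: subsetT |].
apply/forall_inP => _ /rcosetsP[[c d] _ ->].
suff -> : [set hm v 0 | v : 'rV['F_2]_m] :&: 'Z([set: Hm m]) :* (c, d) = [set hm c 0].
  by rewrite cards1.
apply/setP => -[a b]; rewrite in_setI mem_rcoset in_set1 center_Hm // mem_Zset.
rewrite -[(a, b)]/(hm a b) -[(c, d)]/(hm c d) Hm_invE Hm_mulE /= subr_eq0.
apply/andP/eqP => [[/imsetP[v _ [-> ->]] /eqP->] // | [-> ->]].
by split; [apply/imsetP; exists c | ].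
Qed.

Definition Hm_pad m (x : Hm (m - 1)) : Hm m := hm (pad m x.1) (pad (m - 2) x.2).

Lemma Hm_padM m : {morph @Hm_pad m : x y / x * y}.
Proof.
move=> [a b] [c d]; rewrite -[(a, b)]/(hm a b) -[(c, d)]/(hm c d) !Hm_mulE /Hm_pad /=.
by rewrite !padD fm_pad // leq_subr.
Qed.

Lemma Hm_pad_inj m : injective (@Hm_pad m).
Proof.
move=> [a b] [c d] [/pad_inj eq_ac /pad_inj eq_bd].
by rewrite eq_ac ?eq_bd ?leq_subr //; lia.
Qed.

Definition Hm_pad_morphism m : {morphism [set: Hm (m - 1)] >-> Hm m} :=
  Morphism (in2W (@Hm_padM m)).

Lemma Hm_pad_xb m p : (p <= m - 1)%N -> Hm_pad (hm (xb (m - 1) p) 0) = hm (xb m p) 0.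
Proof. by move=> le_p; rewrite /Hm_pad /= pad0 pad_xb // le_p leq_subr. Qed.

Lemma gen_xb_sub_Hm_pad m :
  <<[set hm (xb m i.+1) 0 | i : 'I_(m - 1)]>> \subset Hm_pad_morphism m @* [set: Hm (m - 1)].
Proof.
rewrite morphimEdom gen_subG; apply/subsetP => _ /imsetP[i _ ->].
by rewrite -Hm_pad_xb // imset_f ?inE.
Qed.

Lemma morphim_Hm_pad m :
  Hm_pad_morphism m @* [set: Hm (m - 1)] = <<[set hm (xb m i.+1) 0 | i : 'I_(m - 1)]>>.
Proof.
set G := <<_>>; apply/eqP; rewrite eqEsubset gen_xb_sub_Hm_pad andbT morphimEdom.
(* The coordinate y_(m-2) of the centre is the one that no commutator [x_1, x_(j+3)] with
   j + 3 < m reaches; it vanishes on G because it vanishes on the image. *)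
have G_last c d : hm c d \in G -> rcoef d (m - 3) = 0.
  move=> /(subsetP (gen_xb_sub_Hm_pad m)); rewrite morphimEdom => /imsetP[[a b] _ [_ ->]].
  by rewrite rcoef_pad ?rcoef_out //; lia.
apply/subsetP => _ /imsetP[[a b] _ ->]; rewrite /= /Hm_pad /=.
have [d Gd] : exists d, hm (pad m a) d \in G.
  apply: (exists_hm_supported (P := [pred i | i < m - 1]%N)) => [j lt_j | i].
    by rewrite mem_gen //; apply/imsetP; exists (Ordinal lt_j).
  by rewrite /= -leqNgt => le_i; rewrite rcoef_pad ?rcoef_out //; lia.
rewrite (hm_split _ _ d) groupM //.
apply: (mem_hm0_supported (P := [pred i | i < m - 3]%N)) => [j /= lt_j | i].
  have [lt_0 lt_j2] : (0 < m - 1)%N /\ (j.+2 < m - 1)%N by split; lia.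
  rewrite -commg_x1_xb groupR // mem_gen //; apply/imsetP.
    by exists (Ordinal lt_0).
  by exists (Ordinal lt_j2).
rewrite /= -leqNgt rcoefB => le_i; have [-> | lt_i] := eqVneq i (m - 3)%N.
  by rewrite (G_last _ _ Gd) rcoef_pad ?rcoef_out ?subr0 //; lia.
by rewrite !rcoef_out ?subr0 //; lia.
Qed.

Lemma isog_gen_xb m : <<[set hm (xb m i.+1) 0 | i : 'I_(m - 1)]>> \isog [set: Hm (m - 1)].
Proof.
rewrite isog_sym; apply/isogP; exists (Hm_pad_morphism m); last exact: morphim_Hm_pad.
by apply/injmP; apply: in2W; apply: Hm_pad_inj.
Qed.

Theorem lemma2p1 (m : nat) (hm4 : (4 <= m)%N) :
  ('C[hm (xb m 1) 0%R] =
     <<[set hm (xb m 1) 0%R; hm (xb m 2) 0%R] :|: Zset m>>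
   /\ 'C[hm (xb m m) 0%R] =
     <<[set hm (xb m m) 0%R; hm (xb m m.-1) 0%R] :|: Zset m>>)
  /\ ([~: [set: Hm m], [set: Hm m]] = 'Z([set: Hm m])
      /\ 'Z([set: Hm m]) = Zset m
      /\ #|Zset m| = (2 ^ (m - 2))%N)
  /\ is_transversal [set hm v 0%R | v : 'rV['F_2]_m]
       (rcosets 'Z([set: Hm m]) [set: Hm m]) [set: Hm m]
  /\ <<[set hm (xb m i.+1) 0%R | i : 'I_(m - 1)]>> \isog [set: Hm (m - 1)].
Proof.
have m_ge2 : (2 <= m)%N by lia.
split; first by split; [exact: cent1_x1_gen | exact: cent1_xm_gen].
split; first by split; [exact: der1_Hm | split; [exact: center_Hm | exact: card_Zset]].
by split; [exact: transversal_center_Hm | exact: isog_gen_xb].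
Qed.
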